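(* Let $\varphi(z)=\frac{e^z-1}{z}$ for $z\neq 0$ and $\varphi(0)=1$. Let $\zeta<0$ and $\eta>0$ with $\eta\geq 2/|\zeta|$. Then for all $\lambda\leq 0$, $$\varphi(\eta\lambda)(\lambda+\zeta)\Bigl(1-\frac{\eta\lambda}{2}\varphi(\eta\lambda)\Bigr)\in\Bigl[\tfrac{3}{2}\zeta,\,0\Bigr].$$
   Context: The quantity $\varphi(\eta\lambda)(\lambda+\zeta)(1-\frac{\eta\lambda}{2}\varphi(\eta\lambda))$ is the coefficient of the ''second-order averaged force'' $f_{\eta,2}$ when the splitting $f_F(y)=\lambda y$, $f_S(y)=\zeta y$ is used. *)

From Stdlib Require Import Reals.
Open Scope R_scope.

Definition phi (z : R) : R :=
  if Req_EM_T z 0 then 1 else (exp z - 1) / z.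

(* Write x = eta lambda <= 0 and p = phi x > 0.  Since x p = e^x - 1, the correction
   factor 1 - x p / 2 equals (3 - e^x) / 2, which lies in [1, 3/2].  The Pade-type
   bound e^x (2 - x) >= 2 + x gives p (1 - x/2) <= 1, and the step-size condition
   eta |zeta| >= 2 gives lambda + zeta >= zeta (1 - x/2); multiplying out yields
   the lower bound 3/2 zeta, while the upper bound 0 is a sign count. *)
From Stdlib Require Import Reals Lra Psatz.
From Coquelicot Require Import Coquelicot.
Open Scope R_scope.

Lemma exp_mul_one_sub_le (t : R) : exp t * (1 - t) <= 1.
Proof.
  pose proof (exp_ineq1_le (- t)) as Hlin.
  pose proof (exp_pos t) as Hpos.
  rewrite exp_Ropp in Hlin.
  assert (Hinv : exp t * / exp t = 1) by (field; lra).
  nra.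
Qed.

Lemma exp_pade_ge (x : R) : x <= 0 -> 2 + x <= exp x * (2 - x).
Proof.
  intros Hx.
  set (h := fun t => exp t * (2 - t) - (2 + t)).
  set (dh := fun t => exp t * (1 - t) - 1).
  destruct (MVT_gen h x 0 dh) as [c [_ Hmvt]].
  - intros t _. unfold h, dh. auto_derive; [exact I | ring].
  - intros t _. unfold h. reg.
  - pose proof (exp_mul_one_sub_le c) as Hdc.
    unfold h, dh in Hmvt. rewrite exp_0 in Hmvt. nra.
Qed.

Lemma mul_phi (z : R) : z * phi z = exp z - 1.
Proof.
  unfold phi. destruct (Req_EM_T z 0) as [->|Hz].
  - rewrite exp_0. ring.
  - field. exact Hz.
Qed.

(* [exp z - 1] has the sign of [z]. *)
Lemma phi_gt0 (z : R) : 0 < phi z.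
Proof.
  unfold phi. destruct (Req_EM_T z 0) as [_|Hz]; [lra|].
  destruct (Rlt_or_le z 0) as [Hneg|Hnneg].
  - assert (exp z < 1) by (rewrite <- exp_0; apply exp_increasing; exact Hneg).
    apply Rdiv_neg_neg; lra.
  - assert (1 < exp z) by (rewrite <- exp_0; apply exp_increasing; lra).
    apply Rdiv_pos_pos; lra.
Qed.

Lemma phi_mul_two_sub_le (x : R) : x <= 0 -> phi x * (2 - x) <= 2.
Proof.
  intros Hx. destruct (Req_dec x 0) as [->|Hx0].
  - unfold phi. destruct (Req_EM_T 0 0); [lra | contradiction].
  - pose proof (mul_phi x). pose proof (exp_pade_ge x Hx). nra.
Qed.

Lemma phi_correction_bounds (x : R) :
  x <= 0 -> 1 <= 1 - x / 2 * phi x <= 3 / 2.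
Proof.
  intros Hx.
  pose proof (mul_phi x). pose proof (phi_gt0 x). pose proof (exp_pos x).
  split; nra.
Qed.

Theorem theorem2p2 (zeta eta : R) :
  zeta < 0 -> 0 < eta -> 2 / Rabs zeta <= eta ->
  forall lambda : R, lambda <= 0 ->
    let v := phi (eta * lambda) * (lambda + zeta)
             * (1 - (eta * lambda / 2) * phi (eta * lambda)) in
    3 / 2 * zeta <= v /\ v <= 0.
Proof.
  intros Hzeta Heta Hstep lambda Hlambda v. unfold v; clear v.
  rewrite Rabs_left in Hstep by lra.
  assert (Hstep' : 2 <= eta * - zeta).
  { apply Rmult_le_compat_r with (r := - zeta) in Hstep; [|lra].
    unfold Rdiv in Hstep. rewrite Rmult_assoc, Rinv_l in Hstep; lra. }
  assert (Hx : eta * lambda <= 0) by nra.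
  assert (Hshift : zeta * (1 - eta * lambda / 2) <= lambda + zeta) by nra.
  set (x := eta * lambda) in *.
  pose proof (phi_gt0 x) as Hp.
  pose proof (phi_mul_two_sub_le x Hx) as Hpade.
  pose proof (phi_correction_bounds x Hx) as [Hw1 Hw2].
  set (p := phi x) in *.
  set (w := 1 - x / 2 * p) in *.
  split.
  - assert (p * (1 - x / 2) * w <= 3 / 2) by nra.
    nra.
  - assert (p * (lambda + zeta) <= 0) by nra. nra.
Qed.
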